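(* Let $t,q\ge 0$ and $s_1,\dots,s_t\ge 2$ be integers, and let $G^*=K_1\vee (P_3\cup C_{s_1}\cup\cdots\cup C_{s_t}\cup qK_2)$, where $C_2$ denotes a digon, and let $n$ be the number of vertices of $G^*$. Then the least $Q$-eigenvalue satisfies $\sigma_n(G^* )<1$.
   Context: Multigraphs without loops are allowed: degree = number of incident edges; the $(u,v)$ entry of the adjacency matrix $A$ is the number of edges between $u$ and $v$; $C_2$ is the digon (two vertices joined by two parallel edges). $Q=A+D$ with $D$ the diagonal degree matrix, with eigenvalues $\sigma_1\ge\cdots\ge\sigma_n$. $P_3$ is the path on $3$ vertices; $K_1\vee H$ adds one vertex adjacent to all vertices of $H$; $\cup$ is disjoint union; $qK_2$ is $q$ disjoint edges. *)

From HB Require Import structures.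
From mathcomp Require Import all_boot all_order all_algebra.
From mathcomp Require Import reals.
Set Implicit Arguments. Unset Strict Implicit. Unset Printing Implicit Defensive.
Import Order.TTheory GRing.Theory Num.Theory.
Local Open Scope ring_scope.

(* A loopless multigraph on vertex set {0,..,n-1} is given by a list of edges
   (pairs of vertex labels); parallel edges are repeated entries. *)

(* For s = 2 this gives two parallel edges (a digon). *)
Fixpoint cycle_edges (o : nat) (ss : seq nat) : seq (nat * nat) :=
  match ss with
  | [::] => [::]
  | s :: ss' => [seq (o + i, o + (i.+1 %% s))%N | i <- iota 0 s] ++ cycle_edges (o + s) ss'
  end.

Definition Gstar_n (s : seq nat) (q : nat) : nat := (4 + sumn s + 2 * q)%N.

(* vertex 0 : the K_1 ; vertices 1,2,3 : P_3 ; then the cycles ; then qK_2 *)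
Definition Gstar_edges (s : seq nat) (q : nat) : seq (nat * nat) :=
  [seq (0%N, v) | v <- iota 1 (Gstar_n s q).-1]
  ++ [:: (1, 2); (2, 3)]%N
  ++ cycle_edges 4 s
  ++ [seq ((4 + sumn s + 2 * j)%N, (4 + sumn s + 2 * j).+1) | j <- iota 0 q].

Definition adjmx (R : ringType) (n : nat) (E : seq (nat * nat)) : 'M[R]_n :=
  \matrix_(i < n, j < n)
    (count (fun e => (e == (i : nat, j : nat)) || (e == (j : nat, i : nat))) E)%:R.

Definition degmx (R : ringType) (n : nat) (E : seq (nat * nat)) : 'M[R]_n :=
  diag_mx (\row_(i < n) \sum_(j < n) adjmx R n E i j).

Definition Qmx (R : ringType) (n : nat) (E : seq (nat * nat)) : 'M[R]_n :=
  adjmx R n E + degmx R n E.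

From mathcomp Require Import all_boot all_order all_algebra.
From mathcomp Require Import reals ring lra zify.
Import Order.TTheory GRing.Theory Num.Theory.
Set Implicit Arguments. Unset Strict Implicit. Unset Printing Implicit Defensive.

(* The partition of the vertices of G* into the centre, the two ends of P_3, the
   middle of P_3, the cycle vertices and the matching vertices is equitable for Q.
   A vector that is constant on the classes is thus an eigenvector for x as soon as
   its five values solve the quotient system.  Solving the four non-central
   equations by cofactors leaves one polynomial equation in x, whose left side is
   -120 - 48 S - 80 q at 0 and 8 at 1 (S = sum of the s_i); so it has a root x in
   [0, 1), where the central value (x - 1)(x - 3)(x - 4)(x - 5) is positive. *)

Definition proper_edge (n : nat) (e : nat * nat) : bool :=
  [&& e.1 < n, e.2 < n & e.1 != e.2].

Definition incidence (E : seq (nat * nat)) (j : nat) : nat :=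
  count (fun e => e.1 == j) E + count (fun e => e.2 == j) E.

Definition edge_within (lo hi : nat) (e : nat * nat) : bool :=
  (lo <= e.1 < hi) && (lo <= e.2 < hi).

Definition matching_edges (o q : nat) : seq (nat * nat) :=
  [seq (o + 2 * k, (o + 2 * k).+1) | k <- iota 0 q].

Definition star_edges (N : nat) : seq (nat * nat) := [seq (0%N, v) | v <- iota 1 N].
Arguments star_edges : simpl never.

Lemma count_iota_eq o m j : count (fun i => o + i == j) (iota 0 m) = (o <= j < o + m).
Proof.
rewrite -(count_map (addn o) (pred1 j)) -iotaDl addn0.
by rewrite count_uniq_mem ?iota_uniq // mem_iota.
Qed.

Lemma map_succ_mod_iota m : [seq i.+1 %% m | i <- iota 0 m] = rot 1 (iota 0 m).
Proof.
case: m => // m; rewrite [in LHS](_ : iota 0 m.+1 = iota 0 m ++ [:: m]).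
  rewrite map_cat /= modnn rot1_cons -cats1 -[1]addn0 iotaDl; congr (_ ++ _).
  apply/eq_in_map => i; rewrite mem_iota => /andP [_ lt_im].
  by rewrite modn_small ?add1n.
by rewrite -addn1 iotaD.
Qed.

Lemma count_iota_succ_mod_eq o m j :
  count (fun i => o + i.+1 %% m == j) (iota 0 m) = (o <= j < o + m).
Proof.
rewrite -(count_map (fun i => i.+1 %% m) (fun k => o + k == j)) map_succ_mod_iota.
have /permP -> : perm_eq (rot 1 (iota 0 m)) (iota 0 m) by rewrite perm_rot.
by rewrite count_iota_eq.
Qed.

Lemma incidence_cycle_edges o s j :
  incidence (cycle_edges o s) j = 2 * (o <= j < o + sumn s).
Proof.
rewrite /incidence; elim: s o => [|m s IHs] o /=; first by rewrite addn0; case: ltnP; lia.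
rewrite !count_cat !count_map addnACA IHs.
rewrite (eq_count (a2 := fun i => o + i == j)) // count_iota_eq.
rewrite (eq_count (a2 := fun i => o + i.+1 %% m == j)) // count_iota_succ_mod_eq.
case: (leqP o j); case: (ltnP j (o + m)); case: (ltnP j (o + m + sumn s)); lia.
Qed.

Lemma cycle_edges_within o s :
  all (edge_within o (o + sumn s)) (cycle_edges o s).
Proof.
elim: s o => [|m s IHs] o //=; rewrite all_cat; apply/andP; split.
  rewrite all_map; apply/allP => i; rewrite mem_iota add0n => /andP [_ lt_im] /=.
  have : i.+1 %% m < m by rewrite ltn_pmod //; lia.
  rewrite /edge_within /=; lia.
by apply: sub_all (IHs (o + m)) => e; rewrite /edge_within; lia.
Qed.

Lemma cycle_edges_loopless o s : all (fun m => 2 <= m) s ->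
  all (fun e => e.1 != e.2) (cycle_edges o s).
Proof.
elim: s o => [|m s IHs] o //= /andP [ge2_m ge2_s]; rewrite all_cat IHs // andbT.
rewrite all_map; apply/allP => i; rewrite mem_iota add0n => /andP [_ lt_im] /=.
rewrite eqn_add2l; case: (ltnP i.+1 m) => [lt_i1m|ge_i1m].
  by rewrite modn_small // neq_ltn ltnSn.
by rewrite (_ : i.+1 = m) ?modnn //; lia.
Qed.

Lemma incidence_matching_edges o q j :
  incidence (matching_edges o q) j = (o <= j < o + 2 * q).
Proof.
rewrite /incidence /matching_edges !count_map.
elim: q => [|q IHq]; first by rewrite /=; lia.
have -> : iota 0 q.+1 = iota 0 q ++ [:: q] by rewrite -addn1 iotaD.
rewrite !count_cat /= !addn0; move: IHq.
case: eqP => /=; case: eqP => /=; lia.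
Qed.

Lemma matching_edges_within o q : all (edge_within o (o + 2 * q)) (matching_edges o q).
Proof.
rewrite all_map; apply/allP => k; rewrite mem_iota add0n => /andP [_ lt_kq].
rewrite /edge_within /=; lia.
Qed.

Lemma matching_edges_loopless o q : all (fun e => e.1 != e.2) (matching_edges o q).
Proof. by rewrite all_map; apply/allP => k _ /=; rewrite neq_ltn ltnSn. Qed.

Section QRowSums.
Local Open Scope ring_scope.
Variable R : comNzRingType.
Implicit Types (w : nat -> R) (E : seq (nat * nat)).

Definition edge_term w (j : nat) (e : nat * nat) : R :=
  (e.2 == j)%:R * (w e.1 + w j) + (e.1 == j)%:R * (w e.2 + w j).

Lemma sumr_count (T : Type) (r : seq T) (P : pred T) :
  \sum_(x <- r) (P x)%:R = (count P r)%:R :> R.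
Proof. by elim: r => [|x r IH]; rewrite ?big_nil ?big_cons //= IH natrD. Qed.

Lemma sum_ord_delta n w a : (a < n)%N -> \sum_(i < n) (a == i)%:R * w i = w a.
Proof.
move=> lt_an; rewrite (bigD1 (Ordinal lt_an)) //= eqxx mul1r big1 ?addr0 // => i.
by rewrite -val_eqE eq_sym => /negPf /= ->; rewrite mul0r.
Qed.

Lemma row_mulmx_edge n w (e : nat * nat) (j : 'I_n) :
  proper_edge n e ->
  \sum_(i < n) w i * ((e == (i : nat, j : nat)) || (e == (j : nat, i : nat)))%:R
  + w j * \sum_(i < n) ((e == (j : nat, i : nat)) || (e == (i : nat, j : nat)))%:R
  = edge_term w j e.
Proof.
case: e => a b /and3P [/= lt_an lt_bn neq_ab].
have match_split (i k : nat) : (((a, b) == (i, k)) || ((a, b) == (k, i)))%:R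
    = (a == i)%:R * (b == k)%:R + (b == i)%:R * (a == k)%:R :> R.
  rewrite !xpair_eqE; case: (eqVneq a i) => [Eai|_]; case: (eqVneq b k) => _;
    case: (eqVneq a k) => _; case: (eqVneq b i) => [Ebi|_];
    rewrite /= ?mul1r ?mul0r ?addr0 ?add0r //.
  by move: neq_ab; rewrite Eai Ebi eqxx.
under eq_bigr => i _ do rewrite match_split mulrDr !(mulrCA (w i)).
under [in X in _ + _ * X]eq_bigr => i _ do
  rewrite match_split addrC (mulrC (b == j)%:R) (mulrC (a == j)%:R).
rewrite !big_split /= (sum_ord_delta (fun k => w k * _) lt_an).
rewrite (sum_ord_delta (fun k => w k * _) lt_bn).
rewrite (sum_ord_delta (fun=> (b == j)%:R) lt_an) (sum_ord_delta (fun=> (a == j)%:R) lt_bn).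
rewrite /edge_term; ring.
Qed.

Lemma row_mulmx_Qmx n E w (j : 'I_n) : all (proper_edge n) E ->
  ((\row_(i < n) w i) *m Qmx R n E) 0 j = \sum_(e <- E) edge_term w j e.
Proof.
move=> wfE; rewrite /Qmx mulmxDr /degmx mul_mx_diag !mxE.
under eq_bigr do rewrite !mxE -sumr_count mulr_sumr.
under [in X in _ + _ * X]eq_bigr do rewrite !mxE -sumr_count.
rewrite exchange_big [X in _ + _ * X]exchange_big mulr_sumr -big_split /=.
apply: eq_big_seq => e /(allP wfE) proper_e.
by rewrite -row_mulmx_edge // big_distrr.
Qed.

Lemma sum_edge_term_within E w c lo hi j :
  all (edge_within lo hi) E -> (forall k, (lo <= k < hi)%N -> w k = c) ->
  \sum_(e <- E) edge_term w j e = (incidence E j)%:R * (2 * c).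
Proof.
move=> withinE wc; rewrite /incidence natrD mulrDl -!sumr_count !big_distrl -big_split /=.
have ind_term k : w k = c -> (k == j)%:R * (c + w j) = (k == j)%:R * (2 * c).
  by case: eqVneq => [<- ->|_]; rewrite ?mul0r //; ring.
apply: eq_big_seq => e /(allP withinE) /andP [/wc w1 /wc w2].
by rewrite /edge_term w1 w2 !ind_term // addrC.
Qed.

Lemma sum_edge_term_star_centre N w :
  \sum_(e <- star_edges N) edge_term w 0 e = \sum_(v <- iota 1 N) w v + N%:R * w 0%N.
Proof.
rewrite big_map (eq_big_seq (fun v => w v + w 0%N)) => [|v]; last first.
  by rewrite mem_iota /edge_term /= => /andP [/gtn_eqF -> _]; rewrite mul0r add0r mul1r.
by rewrite big_split /= big_const_seq count_predT size_iota iter_addr_0 mulr_natl.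
Qed.

Lemma sum_edge_term_star_leaf N w j : (0 < j <= N)%N ->
  \sum_(e <- star_edges N) edge_term w j e = w 0%N + w j.
Proof.
case/andP=> gt0_j le_jN; rewrite big_map.
under eq_bigr => v _ do rewrite /edge_term /= (ltn_eqF gt0_j) mul0r addr0.
rewrite -big_distrl sumr_count count_uniq_mem ?iota_uniq //.
by rewrite mem_iota gt0_j add1n ltnS le_jN /= mul1r.
Qed.

End QRowSums.

Lemma proper_edges_within n lo hi E : hi <= n -> all (edge_within lo hi) E ->
  all (fun e => e.1 != e.2) E -> all (proper_edge n) E.
Proof.
move=> le_hi /allP withinE /allP looplessE; apply/allP => e eE.
by have := withinE e eE; rewrite /proper_edge /edge_within (looplessE e eE) andbT; lia.
Qed.

Lemma Gstar_edges_proper s q : all (fun m => 2 <= m) s ->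
  all (proper_edge (Gstar_n s q)) (Gstar_edges s q).
Proof.
move=> ge2_s; rewrite /Gstar_edges /Gstar_n !all_cat; apply/and4P; split.
- by rewrite all_map; apply/allP => v; rewrite mem_iota /proper_edge /=; lia.
- by rewrite /proper_edge /=; lia.
- apply: proper_edges_within (cycle_edges_within 4 s) (cycle_edges_loopless 4 ge2_s).
  lia.
- exact: proper_edges_within (matching_edges_within _ q) (matching_edges_loopless _ q).
Qed.

Section GstarEigenvector.
Local Open Scope ring_scope.
Variable R : comNzRingType.

Implicit Types x : R.

(* Values of the eigenvector on the five classes; they satisfy the equations of the
   four non-central classes for every x, e.g. (x - 5) cycle_wt x = centre_wt x. *)
Definition centre_wt x := (x - 1) * (x - 4) * (x - 5) * (x - 3).
Definition end_wt x := (x - 2) * (x - 5) * (x - 3).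
Definition mid_wt x := x * (x - 5) * (x - 3).
Definition cycle_wt x := (x - 1) * (x - 4) * (x - 3).
Definition matching_wt x := (x - 1) * (x - 4) * (x - 5).

Definition Gstar_char (S q : nat) x : R :=
  (x - (3 + S + 2 * q)%N%:R) * centre_wt x - 2 * end_wt x - mid_wt x
  - S%:R * cycle_wt x - (2 * q)%N%:R * matching_wt x.

Definition Gstar_vec (S : nat) x (k : nat) : R :=
  if k == 0%N then centre_wt x else if k == 2%N then mid_wt x
  else if (k <= 3)%N then end_wt x else if (k < 4 + S)%N then cycle_wt x
  else matching_wt x.

Lemma Gstar_vec_cycle S x k : (4 <= k < 4 + S)%N -> Gstar_vec S x k = cycle_wt x.
Proof.
move=> k_in; rewrite /Gstar_vec; do 3![case: ifP => [?|_]; first lia].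
by case: ifP => // ?; lia.
Qed.

Lemma Gstar_vec_matching S x k : (4 + S <= k)%N -> Gstar_vec S x k = matching_wt x.
Proof.
by move=> k_in; rewrite /Gstar_vec; do 4![case: ifP => [?|_]; first lia].
Qed.

Lemma sum_Gstar_vec_leaves S q x :
  \sum_(v <- iota 1 (3 + S + 2 * q)) Gstar_vec S x v
  = 2 * end_wt x + mid_wt x + S%:R * cycle_wt x + (2 * q)%N%:R * matching_wt x.
Proof.
rewrite iotaD iotaD !big_cat /=.
rewrite [X in _ + X + _](eq_big_seq (fun=> cycle_wt x)) => [|k]; last first.
  by rewrite mem_iota => k_in; apply: Gstar_vec_cycle; lia.
rewrite [X in _ + X](eq_big_seq (fun=> matching_wt x)) => [|k]; last first.
  by rewrite mem_iota => k_in; apply: Gstar_vec_matching; lia.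
rewrite !big_const_seq !count_predT !size_iota !iter_addr_0 !big_cons big_nil.
by rewrite /Gstar_vec /= -[_ *+ S]mulr_natl -[_ *+ (2 * q)]mulr_natl; ring.
Qed.

Lemma Gstar_row_entry s q x (j : 'I_(Gstar_n s q)) :
  all (fun m => 2 <= m)%N s ->
  let w := Gstar_vec (sumn s) x in
  ((\row_(i < Gstar_n s q) w i) *m Qmx R (Gstar_n s q) (Gstar_edges s q)) 0 j
  = \sum_(e <- star_edges (3 + sumn s + 2 * q)) edge_term w j e
    + edge_term w j (1, 2)%N + edge_term w j (2, 3)%N
    + (2 * (4 <= j < 4 + sumn s))%N%:R * (2 * cycle_wt x)
    + (4 + sumn s <= j < 4 + sumn s + 2 * q)%N%:R * (2 * matching_wt x).
Proof.
move=> ge2_s w; rewrite row_mulmx_Qmx ?Gstar_edges_proper // /Gstar_edges !big_cat.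
have -> : (Gstar_n s q).-1 = (3 + sumn s + 2 * q)%N by rewrite /Gstar_n; lia.
rewrite -/(star_edges _) -/(matching_edges _ q) /=.
rewrite (sum_edge_term_within _ (cycle_edges_within 4 s) (@Gstar_vec_cycle _ x)).
rewrite (sum_edge_term_within _ (matching_edges_within _ q) (c := matching_wt x));
  last by move=> k /andP [k_ge _]; apply: Gstar_vec_matching.
rewrite incidence_cycle_edges incidence_matching_edges !addrA.
by rewrite big_cons big_seq1 /edge_term /= !addrA.
Qed.

Lemma Gstar_eigenvector s q x : all (fun m => 2 <= m)%N s ->
  Gstar_char (sumn s) q x = 0 ->
  let v := \row_(i < Gstar_n s q) Gstar_vec (sumn s) x i in
  v *m Qmx R (Gstar_n s q) (Gstar_edges s q) = x *: v.
Proof.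
move=> ge2_s char0 v; apply/rowP => j; rewrite Gstar_row_entry // !mxE.
move: (j : nat) (ltn_ord j) => {}j; rewrite /Gstar_n => lt_jn.
have [->|j_gt0] := posnP j.
  rewrite sum_edge_term_star_centre sum_Gstar_vec_leaves /edge_term /Gstar_vec /=.
  by rewrite -[LHS]addr0 -char0 /Gstar_char; ring.
rewrite sum_edge_term_star_leaf; last by rewrite j_gt0 /=; lia.
have [j_le3|j_gt3] := leqP j 3.
  by case: j j_gt0 j_le3 {lt_jn} => [|[|[|[|j]]]] // _ _;
    rewrite /edge_term /Gstar_vec /= /centre_wt /end_wt /mid_wt; ring.
have neq_j k : (k <= 3)%N -> (k == j) = false by lia.
rewrite /edge_term /= !neq_j // !mul0r !addr0.
have [lt_jS|ge_jS] := ltnP j (4 + sumn s).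
  rewrite (@Gstar_vec_cycle _ x j) ?j_gt3 //.
  by rewrite /Gstar_vec /= /cycle_wt /centre_wt; ring.
rewrite (@Gstar_vec_matching (sumn s) x j) // lt_jn.
by rewrite /Gstar_vec /= /matching_wt /centre_wt; ring.
Qed.
End GstarEigenvector.

Local Open Scope ring_scope.

Lemma centre_wt_gt0 (R : realDomainType) (x : R) : x < 1 -> 0 < centre_wt x.
Proof.
move=> lt_x1; have -> : centre_wt x = ((1 - x) * (4 - x)) * ((5 - x) * (3 - x)).
  by rewrite /centre_wt; ring.
by do 2![apply: mulr_gt0]; lra.
Qed.

Lemma Gstar_char_root (R : rcfType) S q : exists2 x : R, x < 1 & Gstar_char S q x = 0.
Proof.
pose P : {poly R} :=
  ('X - (3 + S + 2 * q)%N%:R%:P) * (('X - 1) * ('X - 4%:P) * ('X - 5%:P) * ('X - 3%:P))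
  - 2%:P * (('X - 2%:P) * ('X - 5%:P) * ('X - 3%:P)) - 'X * ('X - 5%:P) * ('X - 3%:P)
  - S%:R%:P * (('X - 1) * ('X - 4%:P) * ('X - 3%:P))
  - (2 * q)%N%:R%:P * (('X - 1) * ('X - 4%:P) * ('X - 5%:P)).
have P_char x : P.[x] = Gstar_char S q x.
  by rewrite /P /Gstar_char /centre_wt /end_wt /mid_wt /cycle_wt /matching_wt !hornerE.
have char0 : Gstar_char S q (0 : R) = - 120 - 48 * S%:R - 80 * q%:R.
  by rewrite /Gstar_char /centre_wt /end_wt /mid_wt /cycle_wt /matching_wt; ring.
have char1 : Gstar_char S q (1 : R) = 8.
  by rewrite /Gstar_char /centre_wt /end_wt /mid_wt /cycle_wt /matching_wt; ring.
have [|x /andP [_ le_x1] root_x] := @poly_ivt _ P 0 1 ler01.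
  have := ler0n R S; have := ler0n R q.
  by rewrite !P_char char0 char1 => q_ge0 S_ge0; apply/andP; split; lra.
exists x; last by rewrite -P_char; apply/rootP.
rewrite lt_neqAle le_x1 andbT; apply: contraTneq root_x => ->.
by rewrite /root P_char char1 pnatr_eq0.
Qed.

Theorem lemma3p5 (R : realType) (t q : nat) (s : seq nat)
  (hs_size : size s = t) (hs : all (fun x => 2 <= x)%N s) :
  exists a : R,
    eigenvalue (Qmx R (Gstar_n s q) (Gstar_edges s q)) a /\ a < 1.
Proof.
have [x lt_x1 char_x] := Gstar_char_root R (sumn s) q.
exists x; split => //; apply/eigenvalueP.
exists (\row_i Gstar_vec (sumn s) x i); first exact: Gstar_eigenvector.
have centre : (0 < Gstar_n s q)%N by [].
apply/negP => /eqP /rowP /(_ (Ordinal centre)); rewrite !mxE /=.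
by move/eqP; rewrite gt_eqF // centre_wt_gt0.
Qed.
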